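(* Let $\mathcal{V}$ be a variety of algebras, $\mathcal{C}$ a full subcategory of the category of finitely generated free $\mathcal{V}$-algebras containing the free monogenic algebra $A_0$ on $x_0$, and $\Phi$ an automorphism of $\mathcal{C}$ with main function $(s^\Phi_A)$. Let $A$ be a $\mathcal{C}$-algebra with basis $\{x_1,\dots,x_n\}$ and put $y_i=s^\Phi_A(x_i)$ for $i=1,\dots,n$. If $B$ is a $\mathcal{C}$-algebra and $\beta,\gamma:\Phi(A)\to B$ are homomorphisms with $\beta(y_i)=\gamma(y_i)$ for all $i=1,\dots,n$, then $\beta=\gamma$.
   Context: Morphisms of $\mathcal{C}$ are all homomorphisms. For $a\in A$, $\alpha^A_a:A_0\to A$ is the homomorphism with $x_0\mapsto a$. Let $\eta^\Phi_0:\Phi^{-1}(A_0)\to A_0$ be the homomorphism sending every element of a fixed basis of $\Phi^{-1}(A_0)$ to $x_0$ (the identity if $\Phi(A_0)=A_0$), and $\eta^\Phi=\Phi(\eta^\Phi_0):A_0\to\Phi(A_0)$. The main function is $s^\Phi_A:|A|\to|\Phi(A)|$, $s^\Phi_A(a)=\Phi(\alpha^A_a)(\eta^\Phi(x_0))$. *)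

From mathcomp Require Import all_boot.
From Stdlib Require Import ClassicalEpsilon.
Set Implicit Arguments. Unset Strict Implicit. Unset Printing Implicit Defensive.

Record signature := Signature { op : Type; arity : op -> nat }.

Record algebra (S : signature) := Algebra {
  carrier :> Type;
  interp : forall o : op S, ('I_(arity o) -> carrier) -> carrier }.
Arguments interp {S} _ o _.

Inductive term (S : signature) :=
| Var : nat -> term S
| App : forall o : op S, ('I_(arity o) -> term S) -> term S.

Fixpoint eval (S : signature) (A : algebra S) (v : nat -> A) (t : term S) : A :=
  match t with
  | Var k => v k
  | App o f => interp A o (fun i => eval v (f i))
  end.

(* A variety is given (Birkhoff) by a set E of identities t = u. *)
Definition model (S : signature) (E : term S -> term S -> Prop) (A : algebra S) :=
  forall t u, E t u -> forall v : nat -> A, eval v t = eval v u.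

Definition is_hom (S : signature) (A B : algebra S) (f : A -> B) :=
  forall (o : op S) (args : 'I_(arity o) -> A),
    f (interp A o args) = interp B o (fun i => f (args i)).

Definition is_basis (S : signature) (E : term S -> term S -> Prop)
    (A : algebra S) (n : nat) (x : 'I_n -> A) :=
  model E A /\
  forall B : algebra S, model E B -> forall g : 'I_n -> B,
    exists h : A -> B, [/\ is_hom h, (forall i, h (x i) = g i) &
      forall h' : A -> B, is_hom h' -> (forall i, h' (x i) = g i) ->
        forall a, h' a = h a].
Arguments is_basis {S} E A n x.

Definition fg_free (S : signature) (E : term S -> term S -> Prop) (A : algebra S) :=
  exists n (x : 'I_n -> A), is_basis E A n x.
Arguments fg_free {S} E A.

(* C is given by its class of objects Cobj; morphisms are all homomorphisms.
   A functor is an object map Fobj and a morphism map Fmor; it is an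
   automorphism (isomorphism of categories C -> C) iff it is a functor that is
   bijective on objects and bijective on every hom-set. *)
Record is_automorphism (S : signature) (Cobj : algebra S -> Prop)
    (Fobj : algebra S -> algebra S)
    (Fmor : forall A B : algebra S, (A -> B) -> Fobj A -> Fobj B) : Prop := {
  aut_obj : forall A, Cobj A -> Cobj (Fobj A);
  aut_hom : forall (A B : algebra S) (f : A -> B), Cobj A -> Cobj B ->
    is_hom f -> is_hom (Fmor A B f);
  aut_id : forall A : algebra S, Cobj A -> Fmor A A (fun a => a) = (fun a => a);
  aut_comp : forall (A B C : algebra S) (f : A -> B) (g : B -> C),
    Cobj A -> Cobj B -> Cobj C -> is_hom f -> is_hom g ->
    Fmor A C (fun a => g (f a)) = (fun a => Fmor B C g (Fmor A B f a));
  aut_obj_surj : forall B, Cobj B -> exists A, Cobj A /\ Fobj A = B;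
  aut_obj_inj : forall A A', Cobj A -> Cobj A' -> Fobj A = Fobj A' -> A = A';
  aut_mor_inj : forall (A B : algebra S) (f g : A -> B), Cobj A -> Cobj B ->
    is_hom f -> is_hom g -> Fmor A B f = Fmor A B g -> f = g;
  aut_mor_surj : forall (A B : algebra S) (g : Fobj A -> Fobj B),
    Cobj A -> Cobj B -> is_hom g -> exists f : A -> B, is_hom f /\ Fmor A B f = g
}.

Arguments is_automorphism {S} Cobj Fobj Fmor.

Definition cast_alg (S : signature) (A B : algebra S) (e : A = B) : A -> B :=
  match e in _ = B' return A -> B' with erefl => fun a => a end.

(* alpha^A_a : A0 -> A, the homomorphism with x0 |-> a (chosen by epsilon;
   unique when A0 is free on x0 and A is a V-algebra) *)
Definition alpha (S : signature) (A0 : algebra S) (x0 : A0) (A : algebra S) (a : A)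
  : A0 -> A :=
  epsilon (inhabits (fun _ : A0 => a)) (fun f : A0 -> A => is_hom f /\ f x0 = a).

(* eta^Phi = Phi(eta0) : A0 = Phi(Phi^{-1}(A0)) -> Phi(A0), where
   A0' = Phi^{-1}(A0) (e : Fobj A0' = A0) and eta0 : A0' -> A0. *)
Definition etaPhi (S : signature) (Fobj : algebra S -> algebra S)
    (Fmor : forall A B : algebra S, (A -> B) -> Fobj A -> Fobj B)
    (A0 A0' : algebra S) (e : Fobj A0' = A0) (eta0 : A0' -> A0) : A0 -> Fobj A0 :=
  fun a => Fmor A0' A0 eta0 (cast_alg (esym e) a).

Arguments etaPhi {S} Fobj Fmor A0 A0' e eta0 _.

Definition main_fun (S : signature) (Fobj : algebra S -> algebra S)
    (Fmor : forall A B : algebra S, (A -> B) -> Fobj A -> Fobj B)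
    (A0 : algebra S) (x0 : A0) (A0' : algebra S) (e : Fobj A0' = A0)
    (eta0 : A0' -> A0) (A : algebra S) (a : A) : Fobj A :=
  Fmor A0 A (alpha x0 a) (etaPhi Fobj Fmor A0 A0' e eta0 x0).
Arguments main_fun {S} Fobj Fmor A0 x0 A0' e eta0 A a.

From mathcomp Require Import all_boot.
From Stdlib Require Import ClassicalEpsilon FunctionalExtensionality.

(* Write B = Phi(B'), beta = Phi(b') and gamma = Phi(g') with b', g' : A -> B'.
   The main function is natural, Phi(f)(s_A(a)) = s_B'(f a), so the hypothesis
   says s_B'(b' x_i) = s_B'(g' x_i).  The main function is injective: if
   s_B'(b) = s_B'(c) then Phi(alpha_b o eta0) and Phi(alpha_c o eta0) agree on
   the generator of Phi(Phi^-1(A0)) = A0, so alpha_b o eta0 = alpha_c o eta0 by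
   faithfulness, and evaluating at a basis element gives b = c.  Hence b' and
   g' agree on the basis of A, so b' = g'.  If Phi^-1(A0) has an empty basis,
   every Phi(B') is trivial and there is nothing to prove. *)

Section FreeAlgebras.

Context {S : signature} {E : term S -> term S -> Prop}.

Lemma is_hom_comp {A B C : algebra S} {f : A -> B} {g : B -> C} :
  is_hom f -> is_hom g -> is_hom (fun a => g (f a)).
Proof. by move=> Hf Hg o args; rewrite Hf Hg. Qed.

Lemma fg_free_model (A : algebra S) : fg_free E A -> model E A.
Proof. by case=> n [x []]. Qed.

Lemma basis_hom_ext {A B : algebra S} {n} {x : 'I_n -> A} {f g : A -> B} :
  is_basis E A n x -> model E B -> is_hom f -> is_hom g ->
  (forall i, f (x i) = g (x i)) -> f = g.
Proof.
move=> [_ Hfree] HB Hf Hg Hfg.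
have [h [_ _ Hh]] := Hfree B HB (fun i => g (x i)).
apply: functional_extensionality => a.
by rewrite (Hh f Hf Hfg) (Hh g Hg (fun=> erefl)).
Qed.

Context {A0 : algebra S} {x0 : A0}.
Hypothesis HA0b : is_basis E A0 1 (fun=> x0).

Lemma alphaP {X : algebra S} (a : X) :
  model E X -> is_hom (alpha x0 a) /\ alpha x0 a x0 = a.
Proof.
move=> HX; have [h [Hh Hhx _]] := proj2 HA0b X HX (fun=> a).
apply: (epsilon_spec _ (fun f : A0 -> X => is_hom f /\ f x0 = a)).
by exists h; split; last exact: Hhx ord0.
Qed.

Lemma alpha_comp {X Y : algebra S} {f : X -> Y} (a : X) :
  model E X -> model E Y -> is_hom f ->
  alpha x0 (f a) = (fun c => f (alpha x0 a c)).
Proof.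
move=> HX HY Hf.
have [Hfa Hfax] := alphaP (f a) HY; have [Ha Hax] := alphaP a HX.
apply: (basis_hom_ext HA0b HY Hfa (is_hom_comp Ha Hf)) => _.
by rewrite Hfax Hax.
Qed.

End FreeAlgebras.

Section MainFunction.

Context {S : signature} {E : term S -> term S -> Prop}.
Context {Cobj : algebra S -> Prop}.
Hypothesis HCmodel : forall {A}, Cobj A -> model E A.
Context {Fobj : algebra S -> algebra S}.
Context {Fmor : forall A B : algebra S, (A -> B) -> Fobj A -> Fobj B}.
Hypothesis HF : is_automorphism Cobj Fobj Fmor.
Context {A0 : algebra S} {x0 : A0}.
Hypotheses (HA0 : Cobj A0) (HA0b : is_basis E A0 1 (fun=> x0)).

Lemma main_fun_natural {A0'} {e : Fobj A0' = A0} {eta0 : A0' -> A0}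
    {A B : algebra S} {f : A -> B} (a : A) :
  Cobj A -> Cobj B -> is_hom f ->
  Fmor A B f (main_fun Fobj Fmor A0 x0 A0' e eta0 A a)
  = main_fun Fobj Fmor A0 x0 A0' e eta0 B (f a).
Proof.
move=> HA HB Hf; rewrite /main_fun.
have [Ha _] := alphaP HA0b a (HCmodel HA).
rewrite (alpha_comp HA0b a (HCmodel HA) (HCmodel HB) Hf).
by rewrite (aut_comp HF HA0 HA HB Ha Hf).
Qed.

Lemma main_fun_inj {A0'} {e : Fobj A0' = A0} {eta0 : A0' -> A0} {w : A0'}
    {B : algebra S} :
  Cobj A0' -> is_hom eta0 -> eta0 w = x0 -> Cobj B ->
  injective (main_fun Fobj Fmor A0 x0 A0' e eta0 B).
Proof.
move=> HA0' Heta0 Hw HB b c; subst A0; rewrite /main_fun /etaPhi /=.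
have [Hb Hbx] := alphaP HA0b b (HCmodel HB).
have [Hc Hcx] := alphaP HA0b c (HCmodel HB).
rewrite -!(equal_f (aut_comp HF HA0' HA0 HB Heta0 _)) // => Hbc.
have HFbc : Fmor A0' B (fun a => alpha x0 b (eta0 a))
          = Fmor A0' B (fun a => alpha x0 c (eta0 a)).
  apply: (basis_hom_ext HA0b (HCmodel (aut_obj HF HB))) => //.
  - exact: (aut_hom HF) (is_hom_comp Heta0 Hb).
  - exact: (aut_hom HF) (is_hom_comp Heta0 Hc).
have := aut_mor_inj HF HA0' HB (is_hom_comp Heta0 Hb) (is_hom_comp Heta0 Hc) HFbc.
by move/equal_f/(_ w); rewrite Hw Hbx Hcx.
Qed.

(* Free on no generators, [Phi^-1(A0)] has a unique homomorphism into each
   [B]; by fullness so does [A0] into [Phi(B)], and every element of [Phi(B)]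
   is the image of [x0] under such a homomorphism. *)
Lemma Fobj_trivial {A0'} (e : Fobj A0' = A0) {z : 'I_0 -> A0'} {B : algebra S} :
  Cobj A0' -> is_basis E A0' 0 z -> Cobj B -> forall u v : Fobj B, u = v.
Proof.
move=> HA0' Hz HB u v; subst A0.
have HFB := HCmodel (aut_obj HF HB).
have hom_unique (f g : Fobj A0' -> Fobj B) : is_hom f -> is_hom g -> f = g.
  move=> Hf Hg.
  have [f' [Hf' <-]] := aut_mor_surj HF HA0' HB Hf.
  have [g' [Hg' <-]] := aut_mor_surj HF HA0' HB Hg.
  by rewrite (basis_hom_ext Hz (HCmodel HB) Hf' Hg') //; case.
have [Hu Hux] := alphaP HA0b u HFB; have [Hv Hvx] := alphaP HA0b v HFB.
by rewrite -Hux -Hvx (hom_unique _ _ Hu Hv).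
Qed.

End MainFunction.

Theorem proposition5
  (S : signature) (E : term S -> term S -> Prop)
  (Cobj : algebra S -> Prop)
  (HC : forall A, Cobj A -> fg_free E A)
  (A0 : algebra S) (x0 : A0) (HA0 : Cobj A0) (HA0b : is_basis E A0 1 (fun _ => x0))
  (Fobj : algebra S -> algebra S)
  (Fmor : forall A B : algebra S, (A -> B) -> Fobj A -> Fobj B)
  (HF : is_automorphism Cobj Fobj Fmor)
  (A0' : algebra S) (HA0' : Cobj A0') (e : Fobj A0' = A0)
  (m : nat) (z : 'I_m -> A0') (Hz : is_basis E A0' m z)
  (eta0 : A0' -> A0) (Heta0 : is_hom eta0) (Heta0z : forall j, eta0 (z j) = x0)
  (A : algebra S) (HA : Cobj A) (n : nat) (x : 'I_n -> A) (Hx : is_basis E A n x)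
  (B : algebra S) (HB : Cobj B) (beta gamma : Fobj A -> B)
  (Hbeta : is_hom beta) (Hgamma : is_hom gamma)
  (Hy : forall i : 'I_n,
     beta (main_fun Fobj Fmor A0 x0 A0' e eta0 A (x i)) = gamma (main_fun Fobj Fmor A0 x0 A0' e eta0 A (x i))) :
  beta = gamma.
Proof.
have HCmodel X : Cobj X -> model E X by move/HC/fg_free_model.
have [B' [HB' eB]] := aut_obj_surj HF HB; subst B.
case: m z Hz Heta0z => [|m] z Hz Heta0z.
  apply: functional_extensionality => u.
  exact: (Fobj_trivial HCmodel HF HA0 HA0b e HA0' Hz HB').
have [b' [Hb' eb]] := aut_mor_surj HF HA HB' Hbeta.
have [g' [Hg' eg]] := aut_mor_surj HF HA HB' Hgamma.
subst beta gamma.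
suff -> : b' = g' by [].
apply: (basis_hom_ext Hx (HCmodel _ HB') Hb' Hg') => i.
apply: (main_fun_inj HCmodel HF HA0 HA0b HA0' Heta0 (Heta0z ord0) HB').
by rewrite -!(main_fun_natural HCmodel HF HA0 HA0b) // Hy.
Qed.
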